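(* Let $d\in\mathbb{N}$, $k\in\{1,\dots,d\}$, $\varepsilon>0$, and $\mathbf{e}_1,\mathbf{e}_2\in\mathbb{R}^d$. Define $$\psi_{feat}(\mathbf{e}_2):=\begin{cases}\max_{i\notin \mathrm{TopFeatures}(\mathbf{e}_1;k)}|e_{2i}| & (k<d),\\ -\varepsilon & (k=d),\end{cases}$$ and $$\ell_{\mathrm{Ftr}}(\mathbf{e}_2;\mathbf{e}_1,k):=\frac{1}{k}\sum_{i\in \mathrm{TopFeatures}(\mathbf{e}_1;k)}\max\big(0,\ \psi_{feat}(\mathbf{e}_2)-|e_{2i}|+\varepsilon\big).$$ Then $$1-\mathrm{FeatAgree}(\mathbf{e}_1,\mathbf{e}_2;k)\le \varepsilon^{-1}\,\ell_{\mathrm{Ftr}}(\mathbf{e}_2;\mathbf{e}_1,k).$$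
   Context: For $\mathbf{x}\in\mathbb{R}^d$, $\mathrm{rank}(\mathbf{x},i)$ denotes the position of index $i$ when the indices $1,\dots,d$ are ordered by descending $|x_i|$, i.e. $\mathrm{rank}(\mathbf{x},i)=|\{j\in[d]:|x_j|\ge|x_i|\}|$, with ties broken so that ranks form a permutation of $[d]$ (paper's convention: if $|x_i|=|x_j|$ with $i>j$ then $\mathrm{rank}(\mathbf{x},j)=\mathrm{rank}(\mathbf{x},i)+1$). $\mathrm{TopFeatures}(\mathbf{x};k):=\{i\in[d]:\mathrm{rank}(\mathbf{x},i)\le k\}$. The top-$k$ feature agreement is $\mathrm{FeatAgree}(\mathbf{e}_1,\mathbf{e}_2;k):=\frac1k\big|\{i\in[d]: i\in\mathrm{TopFeatures}(\mathbf{e}_1;k)\wedge i\in\mathrm{TopFeatures}(\mathbf{e}_2;k)\}\big|$. *)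

From mathcomp Require Import all_boot all_order all_algebra.
Set Implicit Arguments. Unset Strict Implicit. Unset Printing Implicit Defensive.
Import Order.TTheory GRing.Theory Num.Theory.
Local Open Scope ring_scope.

(* Vectors in R^d are rows 'rV[R]_d, indexed by 'I_d (0-based; the paper's
   index i corresponds to i.+1, the order of indices is preserved). *)

(* This is the paper's tie-breaking convention: if |x_i| = |x_j| and i > j
   then rank(x,j) = rank(x,i) + 1.  Ranks form a permutation of 1..d. *)
Definition rank_feat (R : realFieldType) (d : nat) (x : 'rV[R]_d) (i : 'I_d) : nat :=
  #|[set j : 'I_d | (`|x ord0 i| < `|x ord0 j|)
                  || ((`|x ord0 j| == `|x ord0 i|) && (i <= j)%N)]|.

Definition TopFeatures (R : realFieldType) (d : nat) (x : 'rV[R]_d) (k : nat)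
  : {set 'I_d} := [set i : 'I_d | (rank_feat x i <= k)%N].

Definition FeatAgree (R : realFieldType) (d : nat) (e1 e2 : 'rV[R]_d) (k : nat) : R :=
  (#|TopFeatures e1 k :&: TopFeatures e2 k|%:R) / k%:R.

(* Since all |e2_i| >= 0 and the index set is nonempty
   when k < d, using 0 as the neutral element of max is harmless. *)
Definition psi_feat (R : realFieldType) (d : nat) (e1 e2 : 'rV[R]_d) (k : nat)
  (eps : R) : R :=
  if (k < d)%N then \big[Num.max/0]_(i in ~: TopFeatures e1 k) `|e2 ord0 i|
  else - eps.

Definition loss_Ftr (R : realFieldType) (d : nat) (e1 e2 : 'rV[R]_d) (k : nat)
  (eps : R) : R :=
  k%:R^-1 * \sum_(i in TopFeatures e1 k)
              Num.max 0 (psi_feat e1 e2 k eps - `|e2 ord0 i| + eps).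

(* The ranks of the coordinates of [x] form a permutation of [1..d], so
   [TopFeatures x k] has exactly [k] elements and [1 - FeatAgree e1 e2 k] is
   [#|T1 :\: T2| / k], where [Ti := TopFeatures ei k].  A feature [i] of [T1]
   missing from [T2] is outranked in [e2] by [rank e2 i > k = #|T1|] features,
   one of which lies outside [T1]; hence [|e2_i| <= psi_feat] and the hinge
   term of [i] in the loss is at least [eps]. *)

From mathcomp Require Import all_boot all_order all_algebra.
From mathcomp Require Import zify ring lra.
Import Order.TTheory GRing.Theory Num.Theory.
Local Open Scope ring_scope.

Lemma card_ord_ltn n k : (k <= n)%N -> #|[set m : 'I_n | (m < k)%N]| = k.
Proof.
move=> le_kn; have widen_inj : injective (widen_ord le_kn).
  by move=> u v eq_uv; apply: val_inj; exact: (congr1 val eq_uv).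
rewrite -[RHS]card_ord -(card_imset _ widen_inj); apply: eq_card => m.
rewrite inE; apply/idP/imsetP => [lt_mk | [l _ ->]]; last exact: (ltn_ord l).
by exists (Ordinal lt_mk); last exact: val_inj.
Qed.

Section Ranks.
Context {R : realFieldType} {d : nat} (x : 'rV[R]_d).

Definition feat_le (i j : 'I_d) : bool :=
  (`|x ord0 i| < `|x ord0 j|) || ((`|x ord0 j| == `|x ord0 i|) && (i <= j)%N).

Lemma rank_featE i : rank_feat x i = #|[set j | feat_le i j]|.
Proof. by []. Qed.

Lemma feat_le_refl i : feat_le i i.
Proof. by rewrite /feat_le eqxx leqnn orbT. Qed.

Lemma feat_le_abs i j : feat_le i j -> `|x ord0 i| <= `|x ord0 j|.
Proof. by case/orP=> [/ltW | /andP[/eqP-> _]]. Qed.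

Lemma feat_le_trans i j l : feat_le i j -> feat_le j l -> feat_le i l.
Proof.
rewrite /feat_le => /orP[h1 | /andP[/eqP eq1 h1]] /orP[h2 | /andP[/eqP eq2 h2]].
- by rewrite (lt_trans h1 h2).
- by rewrite eq2 h1.
- by rewrite -eq1 h2.
- by rewrite eq2 eq1 eqxx (leq_trans h1 h2) orbT.
Qed.

Lemma feat_le_anti i j : feat_le i j -> feat_le j i -> i = j.
Proof.
rewrite /feat_le => /orP[h1 | /andP[/eqP eq1 h1]] /orP[h2 | /andP[/eqP eq2 h2]].
- by move: (lt_trans h1 h2); rewrite ltxx.
- by move: h1; rewrite eq2 ltxx.
- by move: h2; rewrite eq1 ltxx.
- by apply: val_inj; apply/eqP; rewrite eqn_leq h1 h2.
Qed.

Lemma feat_le_total i j : feat_le i j || feat_le j i.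
Proof. by rewrite /feat_le; case: ltgtP => //= _; exact: leq_total. Qed.

Lemma rank_feat_lt i j : i != j -> feat_le i j -> (rank_feat x j < rank_feat x i)%N.
Proof.
move=> neq_ij le_ij; rewrite !rank_featE; apply: proper_card; rewrite properE.
apply/andP; split.
  by apply/subsetP=> l; rewrite !inE; exact: feat_le_trans.
apply/subsetPn; exists i; rewrite !inE ?feat_le_refl //.
by apply: contra neq_ij => /(feat_le_anti _ _ le_ij)->.
Qed.

Lemma rank_feat_inj : injective (rank_feat x).
Proof.
move=> i j eq_rank; apply/eqP; apply: contraT => neq_ij.
have [le_ij | le_ji] := orP (feat_le_total i j).
  by have := rank_feat_lt _ _ neq_ij le_ij; rewrite eq_rank ltnn.
by rewrite eq_sym in neq_ij; have := rank_feat_lt _ _ neq_ij le_ji; rewrite eq_rank ltnn.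
Qed.

Lemma rank_feat_gt0 i : (0 < rank_feat x i)%N.
Proof. by rewrite rank_featE card_gt0; apply/set0Pn; exists i; rewrite inE feat_le_refl. Qed.

Lemma rank_feat_le i : (rank_feat x i <= d)%N.
Proof. by rewrite rank_featE; apply: leq_trans (max_card _) _; rewrite card_ord. Qed.

Lemma card_TopFeatures k : (k <= d)%N -> #|TopFeatures x k| = k.
Proof.
move=> le_kd.
have rank_pred_lt i : ((rank_feat x i).-1 < d)%N.
  by have := rank_feat_le i; have := rank_feat_gt0 i; lia.
pose r i := Ordinal (rank_pred_lt i).
have r_inj : injective r.
  move=> i j /(congr1 val) /= eq_r; apply: rank_feat_inj.
  by have := rank_feat_gt0 i; have := rank_feat_gt0 j; lia.
have -> : TopFeatures x k = r @^-1: [set m : 'I_d | (m < k)%N].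
  by apply/setP=> i; rewrite !inE /=; have := rank_feat_gt0 i; lia.
by rewrite card_preimset // card_ord_ltn.
Qed.

End Ranks.

Lemma sum_hinge_ge {R : realFieldType} {I : finType} (A B : {set I}) (F : I -> R) c :
  B \subset A -> (forall i, i \in B -> c <= F i) ->
  c *+ #|B| <= \sum_(i in A) Num.max 0 (F i).
Proof.
move=> sub_BA c_le_F; rewrite (big_setID B) /= (setIidPr sub_BA) -sumr_const.
rewrite -[X in X <= _]addr0 lerD //.
  by apply: ler_sum => i /c_le_F; rewrite le_max => ->; rewrite orbT.
by apply: sumr_ge0 => i _; rewrite le_max lexx.
Qed.

Lemma abs_le_psi_feat {R : realFieldType} {d : nat} (e1 e2 : 'rV[R]_d) k (eps : R) i :
  i \notin TopFeatures e2 k -> `|e2 ord0 i| <= psi_feat e1 e2 k eps.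
Proof.
rewrite /psi_feat inE -ltnNge => lt_k_rank.
case: ltnP => [lt_kd | le_dk]; last by have := rank_feat_le e2 i; lia.
have : ~~ ([set j | feat_le e2 i j] \subset TopFeatures e1 k).
  apply/negP => /subset_leq_card; rewrite card_TopFeatures ?(ltnW lt_kd) // -rank_featE.
  by rewrite leqNgt lt_k_rank.
case/subsetPn => j; rewrite inE => le_ij j_notin_top.
apply: le_trans (feat_le_abs _ _ _ le_ij) _.
by apply: (le_bigmax_cond _ (j := j)); rewrite inE.
Qed.

Theorem lemma1 (R : realFieldType) (d k : nat) (eps : R) (e1 e2 : 'rV[R]_d) :
  (1 <= k)%N -> (k <= d)%N -> 0 < eps ->
  1 - FeatAgree e1 e2 k <= eps^-1 * loss_Ftr e1 e2 k eps.
Proof.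
move=> k_gt0 le_kd eps_gt0.
rewrite /FeatAgree /loss_Ftr; set T1 := TopFeatures e1 k; set T2 := TopFeatures e2 k.
set n := #|T1 :&: T2|; set L := \sum_(i in T1) _.
have card_T1 : #|T1| = k by exact: card_TopFeatures.
have le_nk : (n <= k)%N by rewrite -card_T1 subset_leq_card ?subsetIl.
have dropped_le_L : eps *+ (k - n) <= L.
  rewrite -card_T1 -cardsD; apply: sum_hinge_ge; first exact: subsetDl.
  move=> i; rewrite inE => /andP[i_notin_T2 _].
  by have := abs_le_psi_feat e1 _ _ eps _ i_notin_T2; lra.
have k_pos : 0 < k%:R :> R by rewrite ltr0n.
rewrite mulrA -invfM [leRHS]mulrC ler_pdivlMr ?mulr_gt0 //.
rewrite -[eps *+ _]mulr_natr natrB // in dropped_le_L.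
suff -> : (1 - n%:R / k%:R) * (eps * k%:R) = eps * (k%:R - n%:R) by [].
by field; rewrite gt_eqF.
Qed.
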